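(* Let $\mathbf{X}$ be a finitely supported real random variable with $\mathbf{E}[\mathbf{X}]=0$ and $\mathrm{Var}[\mathbf{X}]=1$. There exists a constant $K'=K'_{\mathbf{X}}$ such that the following holds: suppose $f:\mathbb{R}^n\to\mathbb{R}$ is a multilinear polynomial of degree at most $d$, $T\subseteq[n]$, and $t\ge1$, with \[ \sum_{i\in T}\widehat{f}(\{i\})^2\ge1\quad\text{and}\quad|\widehat{f}(\{i\})|\le\frac{1}{K'td}\ \text{for all } i\in T. \] Then $\Pr_{\mathbf{x}\sim\mathbf{X}^{\otimes n}}[|f(\mathbf{x})|\ge t]\ge\exp(-K't^2d^2)$.
   Context: A multilinear polynomial is written $f(x)=\sum_{S\subseteq[n]}\widehat{f}(S)\prod_{i\in S}x_i$; $\mathbf{X}^{\otimes n}$ is a vector of $n$ i.i.d. copies of $\mathbf{X}$. *)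

From mathcomp Require Import all_boot all_order all_algebra.
From mathcomp Require Import all_classical all_reals all_analysis.
Set Implicit Arguments. Unset Strict Implicit. Unset Printing Implicit Defensive.
Import Order.TTheory GRing.Theory Num.Theory.
Local Open Scope ring_scope.

(* A finitely supported real random variable X is given by a finite index
   type I, values v : I -> R and probability weights p : I -> R. *)
Definition is_fin_distr (R : realType) (I : finType) (p : I -> R) : Prop :=
  (forall i, 0 <= p i) /\ \sum_(i : I) p i = 1.

Definition fexpect (R : realType) (I : finType) (p : I -> R) (g : I -> R) : R :=
  \sum_(i : I) p i * g i.

Definition mleval (R : realType) (n : nat) (fhat : {set 'I_n} -> R)
  (x : 'I_n -> R) : R :=
  \sum_(S : {set 'I_n}) fhat S * \prod_(i in S) x i.

Definition deg_le (R : realType) (n : nat) (fhat : {set 'I_n} -> R) (d : nat) : Prop :=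
  forall S : {set 'I_n}, fhat S != 0 -> (#|S| <= d)%N.

(* Pr_{x ~ X^{(x)n}} [ P (v o x) ] : product distribution on I^n. *)
Definition prod_prob (R : realType) (I : finType) (p : I -> R) (v : I -> R)
  (n : nat) (P : ('I_n -> R) -> bool) : R :=
  \sum_(w : {ffun 'I_n -> I} | P (fun j => v (w j))) \prod_(j < n) p (w j).

(* Let b be the level-one direction supported on T, normalised so that
   sum_i fhat({i}) b_i = 1.  On the line s |-> s b, f is a polynomial of degree
   d with linear coefficient 1, so by a Markov-type inequality at 0 (proved by
   comparison with a Chebyshev polynomial) |f(s b)| >= 2t for some
   |s| <= 10 t d; the point theta = s b has coordinates O(1/K').  Tilting the
   product measure by the density prod_j (1 + theta_j x_j), which has mean
   theta, gives E[f tilt] = f(theta), hence a large correlation of f with the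
   tilt on the event |f| >= t.  Cauchy-Schwarz, Bonami's bound
   E f^4 <= C^(2d) (E f^2)^2 and the bound E tilt^4 <= exp(O(|theta|^2)) turn
   this into Pr[|f| >= t] >= exp(-O(t^2 d^2)). *)

From mathcomp Require Import all_boot all_order all_algebra.
From mathcomp Require Import all_classical all_reals all_analysis.
From mathcomp Require Import polyrcf.
From mathcomp Require Import ring lra zify.
Set Implicit Arguments. Unset Strict Implicit. Unset Printing Implicit Defensive.
Import Order.TTheory GRing.Theory Num.Theory.
Local Open Scope ring_scope.

Section Chebyshev.
Variable R : comNzRingType.

Fixpoint cheb_pair (k : nat) : {poly R} * {poly R} :=
  if k is k'.+1 then ((cheb_pair k').2, 2%:P * 'X * (cheb_pair k').2 - (cheb_pair k').1)
  else (1, 'X).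

Definition cheb k := (cheb_pair k).1.

Lemma cheb0 : cheb 0 = 1. Proof. by []. Qed.
Lemma cheb1 : cheb 1 = 'X. Proof. by []. Qed.
Lemma chebSS k : cheb k.+2 = 2%:P * 'X * cheb k.+1 - cheb k. Proof. by []. Qed.

Lemma cheb_ind (P : nat -> Prop) : P 0%N -> P 1%N ->
  (forall k, P k -> P k.+1 -> P k.+2) -> forall k, P k.
Proof.
move=> P0 P1 PS k; suff: P k /\ P k.+1 by case.
by elim: k => [|k [IH1 IH2]]; split => //; apply: PS.
Qed.

Lemma coef_2X (q : {poly R}) i :
  (2%:P * 'X * q)`_i = if i == 0%N then 0 else 2 * q`_i.-1.
Proof. by rewrite -mulrA coefCM coefXM; case: eqP => // _; rewrite mulr0. Qed.

Lemma coef_cheb_gt k i : (k < i)%N -> (cheb k)`_i = 0.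
Proof.
elim/cheb_ind: k i => [|| k IH1 IH2] i ki.
- by rewrite cheb0 coefC; case: i ki.
- by rewrite cheb1 coefX; case: i ki => // -[].
rewrite chebSS coefB coef_2X IH1; last by lia.
case: i ki => // i ki /=; rewrite IH2 ?mulr0 ?subr0 //; lia.
Qed.

Lemma cheb_coef01 k :
  (cheb k)`_0 = (if odd k then 0 else (-1) ^+ k./2) /\
  (cheb k)`_1 = (if odd k then (-1) ^+ k./2 * k%:R else 0).
Proof.
elim/cheb_ind: k => [|| k [IH1 IH1'] [IH2 IH2']].
- by rewrite cheb0 !coefC.
- by rewrite cheb1 !coefX /= expr0 mul1r.
rewrite chebSS !coefB !coef_2X /= IH1 IH1' IH2 /=.
case: (boolP (odd k)) => ok /=.
  rewrite uphalf_half ok /= add1n !exprS subrr; split => //.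
  rewrite -[k.+2]addn2 natrD; ring.
rewrite exprS !mulr0 sub0r subr0; split => //; ring.
Qed.

Lemma cheb_odd_coef01 m :
  (cheb m.*2.+1)`_0 = 0 /\ (cheb m.*2.+1)`_1 = (-1) ^+ m * (m.*2.+1)%:R.
Proof.
have [c0 c1] := cheb_coef01 m.*2.+1.
have m2 : (m.*2.+1)./2 = m by rewrite -divn2 -muln2 -addn1 divnMDl // addn0.
have oddn : odd m.*2.+1 by rewrite /= odd_double.
by rewrite oddn m2 in c0 c1.
Qed.

End Chebyshev.
Arguments cheb {R} k.

Section ChebyshevNodes.
Variable R : realType.
Variable n : nat.
Hypothesis n_gt0 : (0 < n)%N.

Definition cheb_angle k : R := k%:R * pi / n%:R.
Definition cheb_node k : R := cos (cheb_angle k).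

Let n_gt0R : (0 : R) < n%:R. Proof. by rewrite ltr0n. Qed.

Lemma horner_cheb_cos k x : (cheb k : {poly R}).[cos x] = cos (k%:R * x).
Proof.
elim/cheb_ind: k => [|| k IH1 IH2].
- by rewrite cheb0 hornerC mul0r cos0.
- by rewrite cheb1 hornerX mul1r.
rewrite chebSS !hornerE IH1 IH2.
have -> : k.+2%:R * x = k.+1%:R * x + x by rewrite -[k.+2]addn1 natrD; ring.
have -> : k%:R * x = k.+1%:R * x - x by rewrite -[k.+1]addn1 natrD; ring.
rewrite cosB cosD; ring.
Qed.


Lemma cheb_angle_itv k : (k <= n)%N -> cheb_angle k \in `[0, pi].
Proof.
move=> kn; rewrite in_itv /= /cheb_angle; apply/andP; split.
  by rewrite divr_ge0 ?mulr_ge0 ?ler0n // ltW // pi_gt0.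
by rewrite ler_pdivrMr // mulrC ler_pM2l ?pi_gt0 // ler_nat.
Qed.

Lemma cheb_node_lt k k' : (k < k')%N -> (k' <= n)%N -> cheb_node k' < cheb_node k.
Proof.
move=> kk k'n; rewrite /cheb_node ltr_cos ?cheb_angle_itv //; last first.
  exact: leq_trans (ltnW kk) k'n.
by rewrite /cheb_angle ltr_pM2r ?invr_gt0 // ltr_pM2r ?pi_gt0 // ltr_nat.
Qed.

Lemma cheb_node_le k k' : (k <= k')%N -> (k' <= n)%N -> cheb_node k' <= cheb_node k.
Proof. by rewrite leq_eqVlt => /orP [/eqP -> //|kk] k'n; exact/ltW/cheb_node_lt. Qed.

Lemma cheb_node_itv k : -1 <= cheb_node k <= 1.
Proof. by rewrite cos_geN1 cos_le1. Qed.

Lemma horner_cheb_node k : (cheb n : {poly R}).[cheb_node k] = (-1) ^+ k.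
Proof.
have cos_natpi j : cos (j%:R * pi) = (-1) ^+ j :> R.
  elim: j => [|j IH]; first by rewrite mul0r cos0.
  by rewrite exprS mulN1r -IH -cosDpi -[j.+1]addn1 natrD mulrDl mul1r.
rewrite /cheb_node horner_cheb_cos /cheb_angle -cos_natpi; congr cos.
by field; rewrite pnatr_eq0 -lt0n.
Qed.

Lemma cheb_node_gt0 k : (k.*2 < n)%N -> 0 < cheb_node k.
Proof.
move=> kn; apply: cos_gt0_pihalf; apply/andP; split.
  apply: lt_le_trans (_ : 0 <= _); first by rewrite oppr_lt0 divr_gt0 ?pi_gt0.
  by rewrite /cheb_angle divr_ge0 ?mulr_ge0 ?ler0n // ltW // pi_gt0.
rewrite /cheb_angle ltr_pdivrMr //.
have : (k.*2)%:R < n%:R :> R by rewrite ltr_nat.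
rewrite -muln2 natrM; have := @pi_gt0 R; nra.
Qed.

Lemma cheb_node_lt0 k : (n < k.*2)%N -> (k <= n)%N -> cheb_node k < 0.
Proof.
move=> kn kn'; rewrite /cheb_node -(@cos_pihalf R) ltr_cos ?cheb_angle_itv //.
  rewrite /cheb_angle ltr_pdivlMr //.
  have : n%:R < (k.*2)%:R :> R by rewrite ltr_nat.
  rewrite -muln2 natrM; have := @pi_gt0 R; nra.
by rewrite in_itv /=; have := @pi_gt0 R => ?; apply/andP; split; lra.
Qed.

End ChebyshevNodes.
Arguments cheb_node {R} n k.

Section Markov.
Variable R : realType.

Let sign_sqr k : (-1) ^+ k * (-1) ^+ k = 1 :> R.
Proof. by rewrite -exprD addnn -mul2n exprM sqrrN expr1n expr1n. Qed.

Lemma interlacing_roots (h : {poly R}) (y : nat -> R) n :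
  (forall k, (k < n)%N -> y k.+1 <= y k /\ h.[y k.+1] * h.[y k] < 0) ->
  exists z : nat -> R, forall k, (k < n)%N -> y k.+1 < z k < y k /\ root h (z k).
Proof.
move=> hy; suff /choice [z hz] : forall k, exists x, (k < n)%N -> y k.+1 < x < y k /\ root h x.
  by exists z.
move=> k; case: (ltnP k n) => [kn|]; last by exists 0.
have [le_y sgn] := hy k kn; have [x + rx] := poly_ivtoo le_y sgn.
by rewrite in_itv /= => yx; exists x.
Qed.

Lemma interlaced_roots_size (p : {poly R}) (y z : nat -> R) n : p != 0 ->
  (forall k k', (k <= k')%N -> (k' <= n)%N -> y k' <= y k) ->
  (forall k, (k < n)%N -> y k.+1 < z k < y k /\ root p (z k)) -> (n < size p)%N.
Proof.
move=> p0 y_decr hz.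
have z_decr k k' : (k < k')%N -> (k' < n)%N -> z k' < z k.
  move=> kk k'n; have [/andP[_ zk'] _] := hz k' k'n.
  have [/andP[zk _] _] := hz k (ltn_trans kk k'n).
  by apply: lt_trans zk' (le_lt_trans (y_decr _ _ kk (ltnW k'n)) zk).
rewrite -[X in (X < _)%N](size_iota 0) -(size_map z).
apply: max_poly_roots p0 _ _.
  by apply/allP => _ /mapP [k + ->]; rewrite mem_iota add0n => /andP[_ /hz []].
rewrite map_inj_in_uniq ?iota_uniq // => k k'.
rewrite !mem_iota !add0n => /andP[_ kn] /andP[_ k'n] ezz.
by case: (ltngtP k k') => // kk; [have := z_decr _ _ kk k'n | have := z_decr _ _ kk kn];
  rewrite ezz ltxx.
Qed.

Lemma horner_cheb_sub_sign n (g : {poly R}) k : (0 < n)%N -> (k <= n)%N ->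
  (forall x, -1 <= x <= 1 -> `|g.[x]| < 1) ->
  0 < (-1) ^+ k * (cheb n - g).[cheb_node n k].
Proof.
move=> n0 kn gb; rewrite hornerD hornerN horner_cheb_node // mulrBr sign_sqr.
have := gb _ (cheb_node_itv R n k); set u := g.[_] => ub.
have : `|(-1) ^+ k * u| < 1 by rewrite normrM normr_sign mul1r.
by move/ltr_normlP => [_ ?]; lra.
Qed.

Lemma cheb_sub_interlaced_roots n (g : {poly R}) : (0 < n)%N ->
  (forall x, -1 <= x <= 1 -> `|g.[x]| < 1) ->
  exists z : nat -> R, forall k, (k < n)%N ->
    cheb_node n k.+1 < z k < cheb_node n k /\ root (cheb n - g) (z k).
Proof.
move=> n0 gb; apply: interlacing_roots => k kn; split; first exact: cheb_node_le.
have := mulr_gt0 (horner_cheb_sub_sign n0 kn gb) (horner_cheb_sub_sign n0 (ltnW kn) gb).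
by rewrite exprS mulN1r !mulNr mulrACA sign_sqr mul1r oppr_gt0.
Qed.

(* Dividing by 'X, the roots [z k] together with the root 0 of [h / 'X] give
   [n] distinct roots: the interval around 0 is the only one that may contain 0. *)
Lemma interlaced_roots_double0 m (h : {poly R}) (y z : nat -> R) :
  (size h <= m.*2.+2)%N -> h`_0 = 0 -> h`_1 = 0 ->
  (forall k k', (k <= k')%N -> (k' <= m.*2.+1)%N -> y k' <= y k) ->
  0 < y m -> y m.+1 < 0 ->
  (forall k, (k < m.*2.+1)%N -> y k.+1 < z k < y k /\ root h (z k)) -> h = 0.
Proof.
move=> hs h0 h1 y_decr ym ym1 hz.
pose kp := drop_poly 1 h.
have h_kp : h = kp * 'X.
  have tk : take_poly 1 h = 0.
    by apply/polyP => i; rewrite coef_take_poly coef0; case: i.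
  by rewrite -{1}(poly_take_drop 1 h) tk add0r expr1.
suff kp_eq0 : kp = 0 by rewrite h_kp kp_eq0 mul0r.
apply/eqP/contraT => kp0.
pose z' k := if k == m then 0 else z k.
have hz' k : (k < m.*2.+1)%N -> y k.+1 < z' k < y k /\ root kp (z' k).
  move=> kn; rewrite /z'; case: eqP => [->|/eqP km].
    by rewrite ym ym1 /root horner_coef0 coef_drop_poly add0n h1.
  have [/andP[zl zr] rz] := hz k kn; split; first by rewrite zl zr.
  have zk0 : z k != 0.
    case: (ltnP k m) => km'.
      by rewrite gt_eqF // (lt_trans _ zl) // (lt_le_trans ym) // y_decr //; lia.
    by rewrite lt_eqF // (lt_trans zr) // (le_lt_trans _ ym1) // y_decr //; lia.
  by move: rz; rewrite /root h_kp hornerMX mulf_eq0 (negbTE zk0) orbF.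
have := interlaced_roots_size kp0 y_decr hz'.
by rewrite size_drop_poly; lia.
Qed.

Lemma bounded_poly_coef1_le m (q : {poly R}) :
  (size q <= m.*2.+2)%N -> q`_0 = 0 ->
  (forall x, -1 <= x <= 1 -> `|q.[x]| <= 1) -> q`_1 <= (m.*2.+1)%:R.
Proof.
set n := m.*2.+1 => sq q0 qb; rewrite leNgt; apply/negP => q1.
have q1_gt0 : 0 < q`_1 by apply: le_lt_trans q1; rewrite ler0n.
set lam := n%:R / q`_1.
have lam_gt0 : 0 < lam by rewrite divr_gt0 // ltr0n.
have lam_lt1 : lam < 1 by rewrite ltr_pdivrMr // mul1r.
set g := ((-1) ^+ m * lam) *: q.
have gb x : -1 <= x <= 1 -> `|g.[x]| < 1.
  move=> /qb qx; rewrite hornerZ normrM normrM normr_sign mul1r (gtr0_norm lam_gt0).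
  by apply: le_lt_trans lam_lt1; apply: ler_piMr => //; exact: ltW.
(* [cheb n - g] vanishes to order 2 at 0, yet has a root between consecutive nodes *)
have [c0 c1] := cheb_odd_coef01 R m.
have [z hz] := cheb_sub_interlaced_roots (isT : (0 < n)%N) gb.
have := horner_cheb_sub_sign (isT : (0 < n)%N) (leq0n n) gb.
rewrite (interlaced_roots_double0 _ _ _ (@cheb_node_le R n isT) _ _ hz).
- by rewrite horner0 mulr0 ltxx.
- apply/leq_sizeP => j jn; rewrite coefB coefZ coef_cheb_gt //.
  by move/leq_sizeP: sq => -> //; rewrite mulr0 subrr.
- by rewrite coefB coefZ c0 q0 mulr0 subrr.
- by rewrite coefB coefZ c1 -mulrA /lam mulfVK ?subrr // gt_eqF.
- by rewrite cheb_node_gt0 // /n; lia.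
- by rewrite cheb_node_lt0 // /n; lia.
Qed.

Lemma exists_large_value (r : {poly R}) (d : nat) (tau sig : R) :
  (0 < d)%N -> (size r <= d.+1)%N -> 0 < tau -> r`_1 = 1 -> 4 * d%:R * tau < sig ->
  exists s, `|s| <= sig /\ tau <= `|r.[s]|.
Proof.
move=> d0 sr t0 r1 ts.
have s0 : 0 < sig by apply: le_lt_trans ts; rewrite !mulr_ge0 ?ler0n // ltW.
apply/not_existsP => small.
have Hs s : `|s| <= sig -> `|r.[s]| < tau.
  by move=> ss; rewrite ltNge; apply/negP => tr; apply: (small s).
pose m := d./2.
have [dm md] : (d <= m.*2.+1)%N /\ (m.*2.+1 <= d.*2)%N.
  by rewrite /m; have := odd_double_half d; case: (odd d) => /=; lia.
pose q := \poly_(i < m.*2.+2) (if i == 0%N then 0 else r`_i * sig ^+ i / (2 * tau)).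
have qx x : q.[x] = (r.[sig * x] - r`_0) / (2 * tau).
  rewrite horner_poly (horner_coef_wide _ (_ : size r <= m.*2.+2)%N); last first.
    by apply: leq_trans sr _; lia.
  rewrite big_ord_recl [in RHS]big_ord_recl /= mul0r add0r expr0 mulr1 addrC addKr.
  rewrite mulr_suml; apply: eq_bigr => i _; rewrite exprMn; field.
  by rewrite gt_eqF.
have qb x : -1 <= x <= 1 -> `|q.[x]| <= 1.
  move=> /andP[x1 x2]; rewrite qx normrM normfV (gtr0_norm (_ : 0 < 2 * tau)) ?mulr_gt0 //.
  rewrite ler_pdivrMr ?mulr_gt0 // mul1r.
  have a : `|r.[sig * x]| < tau.
    apply: Hs; rewrite normrM gtr0_norm //; apply: ler_piMr; first exact: ltW.
    by apply/ler_normlP; split; lra.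
  have b : `|r`_0| < tau by rewrite -horner_coef0; apply: Hs; rewrite normr0 ltW.
  by apply: ltW; apply: le_lt_trans (ler_normB _ _) _; lra.
have := bounded_poly_coef1_le (size_poly _ _) (coef_poly _ _ _) qb.
rewrite coef_poly /= r1 mul1r expr1 ler_pdivrMr ?mulr_gt0 // => h.
have : (m.*2.+1)%:R <= (d.*2)%:R :> R by rewrite ler_nat.
rewrite -[d.*2]muln2 natrM => h2.
have : sig <= 4 * d%:R * tau by apply: le_trans h _; nra.
by rewrite leNgt ts.
Qed.

End Markov.

Section ProductExpectation.
Variable R : realFieldType.
Variable I : finType.
Variable p : I -> R.
Hypothesis p_ge0 : forall i, 0 <= p i.
Hypothesis p_sum1 : \sum_i p i = 1.
Variable n : nat.

Local Notation sample := {ffun 'I_n -> I}.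

Definition Eprod (g : sample -> R) : R := \sum_(w : sample) (\prod_(j < n) p (w j)) * g w.

Definition set_coord (w : sample) (j : 'I_n) (y : I) : sample :=
  [ffun k => if k == j then y else w k].

Definition ignores (j : 'I_n) (G : sample -> R) := forall w y, G (set_coord w j y) = G w.

Lemma eq_Eprod f g : (forall w, f w = g w) -> Eprod f = Eprod g.
Proof. by move=> fg; apply: eq_bigr => w _; rewrite fg. Qed.

Lemma Eprod_prod (h : 'I_n -> I -> R) :
  Eprod (fun w => \prod_j h j (w j)) = \prod_j \sum_i p i * h j i.
Proof.
rewrite /Eprod (bigA_distr_bigA (fun j i => p i * h j i)) /=.
by apply: eq_bigr => w _; rewrite big_split.
Qed.

Lemma Eprod1 : Eprod (fun _ => 1) = 1.
Proof.
rewrite (eq_Eprod (g := fun w => \prod_j (fun _ _ => 1) j (w j))); last by move=> w; rewrite big1.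
by rewrite (Eprod_prod (fun _ _ => 1)) big1 // => j _; under eq_bigr do rewrite mulr1.
Qed.

Lemma EprodD f g : Eprod (fun w => f w + g w) = Eprod f + Eprod g.
Proof. by rewrite /Eprod -big_split; apply: eq_bigr => w _; rewrite mulrDr. Qed.

Lemma EprodZ c f : Eprod (fun w => c * f w) = c * Eprod f.
Proof. by rewrite /Eprod mulr_sumr; apply: eq_bigr => w _; rewrite mulrCA. Qed.

Lemma EprodC c : Eprod (fun _ => c) = c.
Proof. by rewrite -[c]mulr1 (EprodZ c (fun _ => 1)) Eprod1. Qed.

Lemma EprodB f g : Eprod (fun w => f w - g w) = Eprod f - Eprod g.
Proof.
rewrite (eq_Eprod (g := fun w => f w + (-1) * g w)); last by move=> w; ring.
by rewrite EprodD EprodZ mulN1r.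
Qed.

Lemma Eprod_sum (J : finType) (G : J -> sample -> R) :
  Eprod (fun w => \sum_k G k w) = \sum_k Eprod (G k).
Proof. by rewrite /Eprod; under eq_bigr do rewrite mulr_sumr; rewrite exchange_big. Qed.

Lemma ler_Eprod f g : (forall w, f w <= g w) -> Eprod f <= Eprod g.
Proof.
move=> fg; apply: ler_sum => w _; apply: ler_wpM2l => //.
exact: prodr_ge0.
Qed.

Lemma Eprod_ge0 f : (forall w, 0 <= f w) -> 0 <= Eprod f.
Proof. by move=> f0; apply: sumr_ge0 => w _; rewrite mulr_ge0 ?prodr_ge0. Qed.

Lemma Eprod_resample j F : Eprod (fun w => \sum_y p y * F (set_coord w j y)) = Eprod F.
Proof.
pose W (w : sample) := \prod_(k < n | k != j) p (w k).
have WE (w : sample) : \prod_k p (w k) = p (w j) * W w by rewrite (bigD1 j).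
have W_set (w : sample) y : W (set_coord w j y) = W w.
  by apply: eq_bigr => k kj; rewrite ffunE (negbTE kj).
have set_coordK (w : sample) y : set_coord (set_coord w j y) j (w j) = w.
  by apply/ffunP => k; rewrite !ffunE; case: eqP => // ->.
rewrite /Eprod.
transitivity (\sum_(u : sample * I)
    (\prod_k p (u.1 k)) * (p u.2 * F (set_coord u.1 j u.2))).
  rewrite -(pair_bigA _ (fun (w : sample) y =>
    (\prod_k p (w k)) * (p y * F (set_coord w j y)))) /=.
  by apply: eq_bigr => w _; rewrite mulr_sumr.
(* swap the old and the new value of coordinate [j] *)
pose g (u : sample * I) := (set_coord u.1 j u.2, u.1 j).
have g_inj : injective g.
  move=> [w1 y1] [w2 y2] [e1 e2] /=.
  have ey : y1 = y2.
    by have := congr1 (fun f : sample => f j) e1; rewrite /= !ffunE eqxx.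
  by subst y2; rewrite -(set_coordK w1 y1) -(set_coordK w2 y1) e1 e2.
rewrite (reindex_inj g_inj) /= -(pair_bigA _ (fun (w : sample) y =>
  (\prod_k p (set_coord w j y k)) * (p (w j) * F (set_coord (set_coord w j y) j (w j))))) /=.
apply: eq_bigr => w _.
under eq_bigr do rewrite set_coordK WE W_set ffunE eqxx.
by rewrite -mulr_suml -mulr_suml p_sum1 mul1r WE; ring.
Qed.

Lemma Eprod_ignores j G h : ignores j G ->
  Eprod (fun w => G w * h (w j)) = Eprod G * \sum_y p y * h y.
Proof.
move=> GU; rewrite -(Eprod_resample j (fun w => G w * h (w j))).
rewrite /Eprod mulr_suml; apply: eq_bigr => w _.
rewrite -mulrA; congr (_ * _); rewrite mulr_sumr; apply: eq_bigr => y _.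
by rewrite GU ffunE eqxx; ring.
Qed.

Lemma Eprod_CauchySchwarz f g :
  Eprod (fun w => f w * g w) ^+ 2 <=
  Eprod (fun w => f w ^+ 2) * Eprod (fun w => g w ^+ 2).
Proof.
set a := Eprod (fun w => f w ^+ 2); set b := Eprod (fun w => g w ^+ 2).
set c := Eprod (fun w => f w * g w).
have quad (x y : R) : 0 <= x ^+ 2 * a - 2 * x * y * c + y ^+ 2 * b.
  rewrite -!EprodZ -EprodB -EprodD.
  rewrite (eq_Eprod (g := fun w => (x * f w - y * g w) ^+ 2)); last by move=> w; ring.
  by apply: Eprod_ge0 => w; apply: sqr_ge0.
have a0 : 0 <= a by apply: Eprod_ge0 => w; apply: sqr_ge0.
have b0 : 0 <= b by apply: Eprod_ge0 => w; apply: sqr_ge0.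
have [a_eq0|a_neq0] := eqVneq a 0; last first.
  have := quad c a; rewrite (_ : _ + _ = a * (a * b - c ^+ 2)); last by ring.
  by rewrite pmulr_rge0 ?subr_ge0 // lt_def a_neq0.
have [b_eq0|b_neq0] := eqVneq b 0; last first.
  have := quad b c; rewrite (_ : _ + _ = b * (a * b - c ^+ 2)); last by ring.
  by rewrite pmulr_rge0 ?subr_ge0 // lt_def b_neq0.
have := quad 1 1; have := quad 1 (-1); rewrite a_eq0 b_eq0 => ? ?.
by rewrite (_ : c = 0) ?expr0n ?mulr0 //; lra.
Qed.

Lemma Eprod_CauchySchwarz_sqr f g :
  Eprod (fun w => f w ^+ 2 * g w ^+ 2) ^+ 2 <=
  Eprod (fun w => f w ^+ 4) * Eprod (fun w => g w ^+ 4).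
Proof.
have E4 h : Eprod (fun w => (h w ^+ 2) ^+ 2) = Eprod (fun w => h w ^+ 4).
  by apply: eq_Eprod => w; rewrite -exprM.
by rewrite -!E4; apply: Eprod_CauchySchwarz.
Qed.

Lemma Eprod_mixed_moment_le f g :
  `|Eprod (fun w => f w * g w ^+ 3)| <=
  (Eprod (fun w => f w ^+ 2 * g w ^+ 2) + Eprod (fun w => g w ^+ 4)) / 2.
Proof.
rewrite -EprodD -[_ / 2]mulrC -EprodZ; apply/ler_normlP; split.
  rewrite -mulN1r -EprodZ; apply: ler_Eprod => w.
  have : 0 <= g w ^+ 2 * (f w + g w) ^+ 2 by rewrite mulr_ge0 ?sqr_ge0.
  lra.
apply: ler_Eprod => w.
have : 0 <= g w ^+ 2 * (f w - g w) ^+ 2 by rewrite mulr_ge0 ?sqr_ge0.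
lra.
Qed.

Definition Eprob (P : sample -> bool) := Eprod (fun w => if P w then 1 else 0).

Section Tail.
Variables (f : sample -> R) (t : R).
Let ind w : R := if t <= `|f w| then 1 else 0.

Let ind_sqr w : ind w ^+ 2 = ind w.
Proof. by rewrite /ind; case: (_ <= _); rewrite ?expr1n ?expr0n. Qed.

Lemma Eprod_tail_lower (ph : sample -> R) : 0 <= t ->
  (forall w, 0 <= ph w) -> Eprod ph = 1 ->
  2 * t <= `|Eprod (fun w => f w * ph w)| ->
  t <= `|Eprod (fun w => f w * ph w * ind w)|.
Proof.
move=> t0 ph0 ph1 large.
set out := Eprod (fun w => f w * ph w * (1 - ind w)).
have split : Eprod (fun w => f w * ph w) = Eprod (fun w => f w * ph w * ind w) + out.
  by rewrite -EprodD; apply: eq_Eprod => w; ring.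
rewrite split in large.
have out_le : `|out| <= t.
  have pw w : `|f w * ph w * (1 - ind w)| <= t * ph w.
    rewrite /ind; case: (lerP t `|f w|) => h; first by rewrite subrr mulr0 normr0 mulr_ge0.
    by rewrite subr0 mulr1 normrM (ger0_norm (ph0 w)) ler_wpM2r // ltW.
  have Eph : Eprod (fun w => t * ph w) = t by rewrite EprodZ ph1 mulr1.
  apply/ler_normlP; split; last first.
    by rewrite -Eph; apply: ler_Eprod => w; have /ler_normlP[] := pw w.
  rewrite -Eph -mulN1r -EprodZ; apply: ler_Eprod => w.
  by have /ler_normlP[] := pw w; lra.
by have := ler_normD (Eprod (fun w => f w * ph w * ind w)) out; lra.
Qed.

Lemma Eprod_tail_pow4 (ph : sample -> R) : 0 <= t ->
  t <= `|Eprod (fun w => f w * ph w * ind w)| ->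
  t ^+ 4 <= Eprod (fun w => f w ^+ 4) * Eprod (fun w => ph w ^+ 4) *
            Eprob (fun w => t <= `|f w|) ^+ 2.
Proof.
move=> t0 large; rewrite (_ : Eprob _ = Eprod ind) //.
have CS1 := Eprod_CauchySchwarz (fun w => f w * ph w) ind.
rewrite (eq_Eprod ind_sqr) in CS1.
rewrite (eq_Eprod (f := fun w => (f w * ph w) ^+ 2) (g := fun w => f w ^+ 2 * ph w ^+ 2))
  in CS1; last by move=> w; rewrite exprMn.
have CS2 := Eprod_CauchySchwarz_sqr f ph.
set X := Eprod (fun w => f w * ph w * ind w) in large CS1.
set Y := Eprod (fun w => f w ^+ 2 * ph w ^+ 2) in CS1 CS2.
have Y0 : 0 <= Y by apply: Eprod_ge0 => w; rewrite mulr_ge0 ?sqr_ge0.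
have t2 : t ^+ 2 <= Y * Eprod ind.
  by apply: (le_trans _ CS1); rewrite -(real_normK (num_real X)) ler_pXn2r ?nnegrE.
rewrite -[4%N]/(2 * 2)%N exprM.
apply: (le_trans (_ : _ <= (Y * Eprod ind) ^+ 2)).
  by rewrite ler_pXn2r ?nnegrE ?sqr_ge0 // (le_trans _ t2) ?sqr_ge0.
by rewrite exprMn ler_wpM2r ?sqr_ge0.
Qed.

Lemma Eprob_paley_zygmund (C : R) : 0 < t ->
  Eprod (fun w => f w ^+ 4) <= C * Eprod (fun w => f w ^+ 2) ^+ 2 ->
  2 * t ^+ 2 <= Eprod (fun w => f w ^+ 2) ->
  1 <= 4 * C * Eprob (fun w => t <= `|f w|).
Proof.
move=> t0 hyper large; rewrite (_ : Eprob _ = Eprod ind) //.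
set V := Eprod (fun w => f w ^+ 2) in hyper large.
set Z := Eprod (fun w => f w ^+ 2 * ind w).
have V_le : V <= t ^+ 2 + Z.
  rewrite -[t ^+ 2]EprodC -EprodD; apply: ler_Eprod => w.
  rewrite /ind; case: (lerP t `|f w|) => h; first by rewrite mulr1 lerDr sqr_ge0.
  by rewrite mulr0 addr0 -real_normK ?num_real // ler_pXn2r ?nnegrE // ltW.
have CS := Eprod_CauchySchwarz (fun w => f w ^+ 2) ind.
rewrite (eq_Eprod ind_sqr) in CS.
rewrite (eq_Eprod (f := fun w => (f w ^+ 2) ^+ 2) (g := fun w => f w ^+ 4)) in CS; last first.
  by move=> w; rewrite -exprM.
have V_gt0 : 0 < V by apply: lt_le_trans large; rewrite mulr_gt0 ?exprn_gt0.
have Z_ge : V / 2 <= Z by lra.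
have hV2 : 0 <= V / 2 by rewrite divr_ge0 // ltW.
have : (V / 2) ^+ 2 <= C * V ^+ 2 * Eprod ind.
  apply: le_trans (_ : Z ^+ 2 <= _).
    by rewrite ler_pXn2r ?nnegrE // (le_trans hV2 Z_ge).
  apply: (le_trans CS); apply: ler_wpM2r => //.
  by apply: Eprod_ge0 => w; rewrite /ind; case: ifP.
rewrite (_ : (V / 2) ^+ 2 = V ^+ 2 / 4); last by field.
rewrite ler_pdivrMr // => h.
have V2 : 0 < V ^+ 2 by rewrite exprn_gt0.
nra.
Qed.

End Tail.

End ProductExpectation.

Section Multilinear.
Variable R : realType.
Variable n : nat.
Implicit Types (F : {set 'I_n} -> R) (S V : {set 'I_n}) (j : 'I_n).

(* Coefficients of E_j f and of the derivative D_j f, in O'Donnell's notation. *)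
Definition mlexp j F S := if j \in S then 0 else F S.
Definition mlder j F S := if j \in S then 0 else F (j |: S).
Definition supported F V := forall S, F S != 0 -> S \subset V.

Lemma mlexp_eq0 j F S : j \in S -> mlexp j F S = 0.
Proof. by rewrite /mlexp => ->. Qed.

Lemma mlder_eq0 j F S : j \in S -> mlder j F S = 0.
Proof. by rewrite /mlder => ->. Qed.

Lemma mleval_split j F x :
  mleval F x = mleval (mlexp j F) x + x j * mleval (mlder j F) x.
Proof.
rewrite /mleval (bigID (fun S => j \in S)) /= addrC; congr (_ + _).
  rewrite [RHS](bigID (fun S => j \in S)) /= [X in _ = X + _]big1 ?add0r; last first.
    by move=> S jS; rewrite mlexp_eq0 ?mul0r.
  by apply: eq_bigr => S /negbTE jS; rewrite /mlexp jS.
rewrite mulr_sumr [RHS](bigID (fun S => j \in S)) /= [X in _ = X + _]big1 ?add0r; last first.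
  by move=> S jS; rewrite mlder_eq0 ?mul0r ?mulr0.
rewrite (reindex_onto (fun S => j |: S) (fun S => S :\ j)) /=; last first.
  by move=> S jS; rewrite finset.setD1K.
apply: eq_big => S.
  rewrite setU11 /=; case: (boolP (j \in S)) => jS.
    by apply/negbTE/negP => /eqP eS; move: jS; rewrite -eS setD11.
  by rewrite setU1K // eqxx.
move=> /andP[_ /eqP eS]; have jS : j \notin S by rewrite -eS setD11.
by rewrite /mlder (negbTE jS) big_setU1 //=; ring.
Qed.

Lemma supported_mlexp j F V : supported F V -> supported (mlexp j F) (V :\ j).
Proof.
move=> FV S; rewrite /mlexp; case: (boolP (j \in S)) => jS; first by rewrite eqxx.
by move=> /FV SV; rewrite subsetD1 SV jS.
Qed.

Lemma supported_mlder j F V : supported F V -> supported (mlder j F) (V :\ j).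
Proof.
move=> FV S; rewrite /mlder; case: (boolP (j \in S)) => jS; first by rewrite eqxx.
by move=> /FV SV; rewrite subsetD1 jS andbT (fintype.subset_trans _ SV) // finset.subsetUr.
Qed.

Lemma deg_le_mlexp j F d : deg_le F d -> deg_le (mlexp j F) d.
Proof.
by move=> Fd S; rewrite /mlexp; case: (j \in S); [rewrite eqxx | exact: Fd].
Qed.

Lemma deg_le_mlder j F d : deg_le F d.+1 -> deg_le (mlder j F) d.
Proof.
move=> Fd S; rewrite /mlder; case: (boolP (j \in S)) => jS; first by rewrite eqxx.
by move=> /Fd; rewrite cardsU1 jS.
Qed.

Lemma mleval_mlder_deg0 j F x : deg_le F 0 -> mleval (mlder j F) x = 0.
Proof.
move=> F0; rewrite /mleval big1 // => S _; rewrite /mlder.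
case: (boolP (j \in S)) => jS; first by rewrite mul0r.
have [->|/F0] := eqVneq (F (j |: S)) 0; first by rewrite mul0r.
by rewrite cardsU1 jS.
Qed.

Lemma mleval_supported0 F x : supported F finset.set0 -> mleval F x = F finset.set0.
Proof.
move=> F0; rewrite /mleval (bigD1 finset.set0) //= big_set0 mulr1 big1 ?addr0 // => S S0.
have [->|/F0] := eqVneq (F S) 0; first by rewrite mul0r.
by rewrite finset.subset0 (negbTE S0).
Qed.

Lemma deg_le_gt0 F d (T : {set 'I_n}) :
  deg_le F d -> 0 < \sum_(i in T) F [set i] ^+ 2 -> (0 < d)%N.
Proof.
case: d => // F0; rewrite big1 ?ltxx // => i _.
by have [->|/F0] := eqVneq (F [set i]) 0; rewrite ?expr0n ?cards1.
Qed.

End Multilinear.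

Lemma bonami_step (R : realFieldType) (C c m3 m4 a b a4 b4 e22 e13 : R) :
  0 < C -> 0 <= m4 -> c = 3 + `|m3| + m4 -> 0 <= a -> 0 <= b ->
  a4 <= C * c ^+ 2 * a ^+ 2 -> b4 <= C * b ^+ 2 -> e22 <= C * c * a * b ->
  `|e13| <= (e22 + b4) / 2 ->
  a4 + 6 * e22 + 4 * m3 * e13 + m4 * b4 <= C * c ^+ 2 * (a + b) ^+ 2.
Proof.
move=> C0 m40 hc a0 b0 ha4 hb4 he22 he13.
have m30 := normr_ge0 m3.
have c0 : 0 <= c by lra.
have hm3 : 4 * m3 * e13 <= 2 * `|m3| * (e22 + b4).
  have : m3 * e13 <= `|m3| * `|e13| by rewrite -normrM ler_norm.
  have : `|m3| * `|e13| <= `|m3| * ((e22 + b4) / 2) by rewrite ler_wpM2l.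
  lra.
have k1 : (6 + 2 * `|m3|) * e22 <= 2 * c * (C * c * a * b).
  apply: le_trans (ler_wpM2l _ he22) _; first lra.
  by apply: ler_wpM2r; [rewrite !mulr_ge0 // ?ltW | lra].
have k2 : (2 * `|m3| + m4) * b4 <= c ^+ 2 * (C * b ^+ 2).
  apply: le_trans (ler_wpM2l _ hb4) _; first lra.
  by apply: ler_wpM2r; [rewrite mulr_ge0 ?sqr_ge0 ?ltW | nra].
have -> : C * c ^+ 2 * (a + b) ^+ 2 =
  C * c ^+ 2 * a ^+ 2 + 2 * c * (C * c * a * b) + c ^+ 2 * (C * b ^+ 2) by ring.
lra.
Qed.

Section Anticoncentration.
Variable R : realType.
Variable I : finType.
Variables p v : I -> R.
Hypothesis p_ge0 : forall i, 0 <= p i.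
Hypothesis p_sum1 : \sum_i p i = 1.
Hypothesis mean0 : \sum_i p i * v i = 0.
Hypothesis var1 : \sum_i p i * v i ^+ 2 = 1.
Variable n : nat.

Local Notation sample := {ffun 'I_n -> I}.
Local Notation E := (Eprod p).

Definition fval (F : {set 'I_n} -> R) (w : sample) := mleval F (fun j => v (w j)).

Definition moment3 := \sum_i p i * v i ^+ 3.
Definition moment4 := \sum_i p i * v i ^+ 4.
Definition bonami_const := 3 + `|moment3| + moment4.

Lemma moment4_ge0 : 0 <= moment4.
Proof. by apply: sumr_ge0 => i _; rewrite mulr_ge0 // -[4%N]/(2 * 2)%N exprM sqr_ge0. Qed.

Lemma bonami_const_ge1 : 1 <= bonami_const.
Proof. by have := moment4_ge0; have := normr_ge0 moment3; rewrite /bonami_const; lra. Qed.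

Lemma Eprod_pow4_ge0 (f : sample -> R) : 0 <= E (fun w => f w ^+ 4).
Proof. by apply: Eprod_ge0 => // w; rewrite -[4%N]/(2 * 2)%N exprM sqr_ge0. Qed.

Lemma ignores_fval j F : (forall S : {set 'I_n}, j \in S -> F S = 0) -> ignores j (fval F).
Proof.
move=> Fj w y; apply: eq_bigr => S _.
case: (boolP (j \in S)) => jS; first by rewrite Fj // !mul0r.
congr (_ * _); apply: eq_bigr => i iS; rewrite ffunE.
by case: eqP => // ij; move: jS; rewrite -ij iS.
Qed.

Section Split.
Variables (j : 'I_n) (F : {set 'I_n} -> R).
Let A := fval (mlexp j F).
Let B := fval (mlder j F).
Let ignA : ignores j A := ignores_fval (@mlexp_eq0 _ _ j F).
Let ignB : ignores j B := ignores_fval (@mlder_eq0 _ _ j F).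

Let fval_split w : fval F w = A w + v (w j) * B w.
Proof. exact: mleval_split. Qed.

Let E_ignores k (G : sample -> R) : ignores j G ->
  E (fun w => G w * v (w j) ^+ k) = E G * \sum_i p i * v i ^+ k.
Proof. exact: (Eprod_ignores p_sum1 (fun y => v y ^+ k)). Qed.

Lemma Eprod_fval_sqr_split :
  E (fun w => fval F w ^+ 2) = E (fun w => A w ^+ 2) + E (fun w => B w ^+ 2).
Proof.
rewrite (eq_Eprod p (g := fun w => A w ^+ 2 + ((2 * A w * B w) * v (w j) ^+ 1
  + B w ^+ 2 * v (w j) ^+ 2))); last by move=> w; rewrite fval_split; ring.
rewrite !EprodD !E_ignores ?mean0 ?var1; first by ring.
all: by move=> w y; rewrite ?ignA ignB.
Qed.

Lemma Eprod_fval_pow4_split :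
  E (fun w => fval F w ^+ 4) = E (fun w => A w ^+ 4)
     + 6 * E (fun w => A w ^+ 2 * B w ^+ 2)
     + 4 * moment3 * E (fun w => A w * B w ^+ 3) + moment4 * E (fun w => B w ^+ 4).
Proof.
rewrite (eq_Eprod p (g := fun w => A w ^+ 4 + ((4 * A w ^+ 3 * B w) * v (w j) ^+ 1 +
   ((6 * (A w ^+ 2 * B w ^+ 2)) * v (w j) ^+ 2 +
   ((4 * (A w * B w ^+ 3)) * v (w j) ^+ 3 + B w ^+ 4 * v (w j) ^+ 4))))); last first.
  by move=> w; rewrite fval_split; ring.
rewrite !EprodD !E_ignores ?mean0 ?var1 ?EprodZ -/moment3 -/moment4; first by ring.
all: by move=> w y; rewrite ?ignA ignB.
Qed.

End Split.

Lemma bonami_supported m (V : {set 'I_n}) (F : {set 'I_n} -> R) d :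
  #|V| = m -> supported F V -> deg_le F d ->
  E (fun w => fval F w ^+ 4) <= bonami_const ^+ (2 * d) * E (fun w => fval F w ^+ 2) ^+ 2.
Proof.
elim: m V F d => [|m IH] V F d cV FV Fd.
  have V0 : V = finset.set0 by apply/eqP; rewrite -cards_eq0 cV.
  have fc w : fval F w = F finset.set0 by apply: mleval_supported0; rewrite -V0.
  have Ec k : E (fun w => fval F w ^+ k) = F finset.set0 ^+ k.
    by rewrite -(EprodC p_sum1 n (_ ^+ k)); apply: eq_Eprod => w; rewrite fc.
  rewrite !Ec -exprM ler_peMl ?exprn_ege1 ?bonami_const_ge1 //.
  by rewrite -[4%N]/(2 * 2)%N exprM sqr_ge0.
have [j jV] : exists j, j \in V by apply/card_gt0P; rewrite cV.
have cV' : #|V :\ j| = m by move: cV; rewrite (cardsD1 j V) jV add1n => -[].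
have IHA := IH _ _ _ cV' (supported_mlexp (j := j) FV) (deg_le_mlexp (j := j) Fd).
case: d Fd IHA => [|d] Fd IHA.
  have fA w : fval F w = fval (mlexp j F) w.
    by rewrite /fval (mleval_split j) mleval_mlder_deg0 // mulr0 addr0.
  have EA k : E (fun w => fval F w ^+ k) = E (fun w => fval (mlexp j F) w ^+ k).
    by apply: eq_Eprod => w; rewrite fA.
  by rewrite !EA.
rewrite (Eprod_fval_sqr_split j) (Eprod_fval_pow4_split j).
have IHB := IH _ _ _ cV' (supported_mlder (j := j) FV) (deg_le_mlder (j := j) Fd).
set A := fval (mlexp j F) in IHA *; set B := fval (mlder j F) in IHB *.
rewrite mulnS exprD [bonami_const ^+ 2 * _]mulrC in IHA *.
set C := bonami_const ^+ (2 * d) in IHA IHB *.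
set a := E (fun w => A w ^+ 2) in IHA *; set b := E (fun w => B w ^+ 2) in IHB *.
have a0 : 0 <= a by apply: Eprod_ge0 => // w; apply: sqr_ge0.
have b0 : 0 <= b by apply: Eprod_ge0 => // w; apply: sqr_ge0.
have C0 : 0 < C by rewrite exprn_gt0 // (lt_le_trans ltr01 bonami_const_ge1).
apply: bonami_step; rewrite ?moment4_ge0 //.
- have CS := Eprod_CauchySchwarz_sqr p_ge0 A B.
  have e0 : 0 <= C * bonami_const * a * b.
    by rewrite !mulr_ge0 ?(ltW C0) ?(le_trans ler01 bonami_const_ge1).
  rewrite -(ler_pXn2r (_ : (0 < 2)%N)) ?nnegrE //; last first.
    by apply: Eprod_ge0 => // w; rewrite mulr_ge0 ?sqr_ge0.
  apply: (le_trans CS); rewrite (_ : _ ^+ 2 = (C * bonami_const ^+ 2 * a ^+ 2) * (C * b ^+ 2));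
    last by ring.
  by apply: ler_pM; rewrite ?Eprod_pow4_ge0.
- exact: Eprod_mixed_moment_le.
Qed.

Lemma bonami (F : {set 'I_n} -> R) d : deg_le F d ->
  E (fun w => fval F w ^+ 4) <= bonami_const ^+ (2 * d) * E (fun w => fval F w ^+ 2) ^+ 2.
Proof.
by move=> Fd; apply: (@bonami_supported _ [set: 'I_n]%SET) => // S _; apply: finset.subsetT.
Qed.

Definition tilt (th : 'I_n -> R) (w : sample) := \prod_j (1 + th j * v (w j)).

Definition tilt_const := 6 + 4 * `|moment3| + moment4.

Lemma tilt_const_ge0 : 0 <= tilt_const.
Proof. by have := moment4_ge0; have := normr_ge0 moment3; rewrite /tilt_const; lra. Qed.

Lemma Eprod_monomial_tilt (S : {set 'I_n}) th :
  E (fun w => (\prod_(i in S) v (w i)) * tilt th w) = \prod_(i in S) th i.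
Proof.
pose h j y := (if j \in S then v y else 1) * (1 + th j * v y).
rewrite (eq_Eprod p (g := fun w => \prod_j h j (w j))); last first.
  by move=> w; rewrite /tilt big_split /= big_mkcond.
rewrite (@Eprod_prod _ _ p _ h) [RHS]big_mkcond; apply: eq_bigr => j _ /=; rewrite /h.
case: (j \in S).
  under eq_bigr do rewrite mulrDr mulrCA mulr1 -expr2 mulrDr mulrCA.
  by rewrite big_split /= -mulr_sumr mean0 var1 add0r mulr1.
under eq_bigr do rewrite !mul1r mulrDr mulr1 mulrCA.
by rewrite big_split /= -mulr_sumr mean0 p_sum1 mulr0 addr0.
Qed.

Lemma Eprod_fval_tilt F th : E (fun w => fval F w * tilt th w) = mleval F th.
Proof.
rewrite (eq_Eprod p (g := fun w => \sum_S F S * ((\prod_(i in S) v (w i)) * tilt th w))).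
  by rewrite Eprod_sum; apply: eq_bigr => S _; rewrite EprodZ Eprod_monomial_tilt.
by move=> w; rewrite /fval /mleval mulr_suml; apply: eq_bigr => S _; rewrite mulrA.
Qed.

Lemma Eprod_tilt th : E (tilt th) = 1.
Proof.
have := Eprod_monomial_tilt finset.set0 th; rewrite big_set0 => <-.
by apply: eq_Eprod => w; rewrite big_set0 mul1r.
Qed.

Lemma tilt_ge0 th w : (forall j i, `|th j * v i| <= 1) -> 0 <= tilt th w.
Proof.
move=> thv; apply: prodr_ge0 => j _.
by have /ler_normlP[] := thv j (w j); lra.
Qed.

Lemma Eprod_tilt_pow4 th : (forall j, `|th j| <= 1) ->
  E (fun w => tilt th w ^+ 4) <= \prod_j (1 + tilt_const * th j ^+ 2).
Proof.
move=> th1.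
rewrite (eq_Eprod p (g := fun w => \prod_j (fun j y => (1 + th j * v y) ^+ 4) j (w j))).
  2: by move=> w; rewrite /tilt prodrXl.
rewrite (@Eprod_prod _ _ p _ (fun j y => (1 + th j * v y) ^+ 4)).
apply: ler_prod => j _ /=; apply/andP; split.
  by apply: sumr_ge0 => i _; rewrite mulr_ge0 // -[4%N]/(2 * 2)%N exprM sqr_ge0.
set x := th j; have x1 : `|x| <= 1 := th1 j.
rewrite (eq_bigr (fun i => p i + (4 * x) * (p i * v i) + (6 * x ^+ 2) * (p i * v i ^+ 2)
   + (4 * x ^+ 3) * (p i * v i ^+ 3) + x ^+ 4 * (p i * v i ^+ 4))); last by move=> i _; ring.
rewrite !big_split /= -!mulr_sumr p_sum1 mean0 var1 -/moment3 -/moment4.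
(* for [|x| <= 1] the cubic and quartic terms are dominated by [x^2] *)
have x2 : x ^+ 2 <= 1 by rewrite -(expr1n _ 2) -real_normK ?num_real // ler_pXn2r ?nnegrE.
have h4 : x ^+ 4 * moment4 <= x ^+ 2 * moment4.
  by rewrite ler_wpM2r ?moment4_ge0 // -[4%N]/(2 + 2)%N exprD ler_piMr ?sqr_ge0.
have h3 : x ^+ 3 * moment3 <= x ^+ 2 * `|moment3|.
  apply: le_trans (ler_norm _) _; rewrite normrM normrX ler_wpM2r //.
  by rewrite -real_normK ?num_real // exprS ler_piMl ?sqr_ge0.
by have := moment4_ge0; have := normr_ge0 moment3; rewrite /tilt_const; nra.
Qed.

Lemma anticoncentration F d th t : 0 < t ->
  (forall j i, `|th j * v i| <= 1) -> (forall j, `|th j| <= 1) ->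
  deg_le F d -> 2 * t <= `|mleval F th| ->
  1 <= 16 * (bonami_const ^+ (2 * d)) ^+ 2 * \prod_j (1 + tilt_const * th j ^+ 2) *
       Eprob p (fun w => t <= `|fval F w|) ^+ 2.
Proof.
move=> t0 thv th1 Fd large.
set Pr := Eprob _ _; set C := bonami_const ^+ (2 * d).
set Phi := \prod_j _.
have C1 : 1 <= C by rewrite exprn_ege1 ?bonami_const_ge1.
have Phi1 : 1 <= Phi.
  rewrite /Phi; elim/big_ind: _ => // [x y x1 y1|j _].
    by rewrite -[1]mulr1 ler_pM ?ler01.
  by rewrite lerDl mulr_ge0 ?sqr_ge0 ?tilt_const_ge0.
have Pr0 : 0 <= Pr by apply: Eprod_ge0 => // w; case: ifP.
have hyper := bonami Fd; rewrite -/C in hyper.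
set V := E (fun w => fval F w ^+ 2) in hyper.
have [V_large|V_small] := lerP (2 * t ^+ 2) V.
  have PZ := Eprob_paley_zygmund p_ge0 p_sum1 t0 hyper V_large.
  apply: le_trans (_ : (4 * C * Pr) ^+ 2 <= _); first by rewrite exprn_ege1.
  rewrite (_ : (4 * C * Pr) ^+ 2 = 16 * C ^+ 2 * 1 * Pr ^+ 2); last by ring.
  by rewrite ler_wpM2r ?sqr_ge0 // ler_wpM2l // mulr_ge0 ?sqr_ge0.
rewrite -(Eprod_fval_tilt F) in large.
have tail := Eprod_tail_lower p_ge0 (ltW t0) (fun w => tilt_ge0 w thv) (Eprod_tilt th) large.
have := Eprod_tail_pow4 p_ge0 (ltW t0) tail; rewrite -/Pr.
set F4 := E _; set P4 := E _ => t4.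
have P4_le : P4 <= Phi by apply: Eprod_tilt_pow4.
have F4_le : F4 <= C * (4 * t ^+ 4).
  apply: (le_trans hyper); rewrite ler_wpM2l ?(le_trans ler01 C1) //.
  rewrite (_ : 4 * t ^+ 4 = (2 * t ^+ 2) ^+ 2); last by ring.
  have V0 : 0 <= V by apply: Eprod_ge0 => // w; apply: sqr_ge0.
  by rewrite ler_pXn2r ?nnegrE ?mulr_ge0 ?sqr_ge0 // ltW.
have t4_gt0 : 0 < t ^+ 4 by rewrite exprn_gt0.
have : t ^+ 4 <= t ^+ 4 * (4 * C * Phi * Pr ^+ 2).
  apply: (le_trans t4); rewrite (_ : t ^+ 4 * _ = C * (4 * t ^+ 4) * Phi * Pr ^+ 2); last by ring.
  by rewrite ler_wpM2r ?sqr_ge0 // ler_pM ?Eprod_pow4_ge0.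
rewrite ler_pMr // => h; apply: (le_trans h).
rewrite (_ : 16 * C ^+ 2 * Phi * Pr ^+ 2 = (4 * C) * (4 * C * Phi * Pr ^+ 2)); last by ring.
by rewrite ler_peMl ?(le_trans ler01 h) //; lra.
Qed.

End Anticoncentration.

Section Restriction.
Variable R : realType.
Variable n : nat.
Implicit Types (F : {set 'I_n} -> R) (b : 'I_n -> R).

Definition line_poly (F : {set 'I_n} -> R) (b : 'I_n -> R) : {poly R} :=
  \sum_(S : {set 'I_n}) (F S * \prod_(i in S) b i) *: 'X^#|S|.

Lemma horner_line_poly F b s : (line_poly F b).[s] = mleval F (fun i => s * b i).
Proof.
rewrite /line_poly horner_sum; apply: eq_bigr => S _.
by rewrite hornerZ hornerXn big_split /= prodr_const; ring.
Qed.

Lemma coef1_line_poly F b : (line_poly F b)`_1 = \sum_i F [set i] * b i.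
Proof.
rewrite /line_poly coef_sum.
under eq_bigr do rewrite coefZ coefXn eq_sym mulr_natr mulrb.
rewrite -big_mkcond /= (eq_bigl (mem [set [set i] | i : 'I_n])); last first.
  by move=> S; apply/cards1P/imsetP => [[i ->]|[i _ ->]]; exists i.
rewrite big_imset /=; last by move=> i j _ _; apply: set1_inj.
by apply: eq_bigr => i _; rewrite big_set1.
Qed.

Lemma size_line_poly F b d : deg_le F d -> (size (line_poly F b) <= d.+1)%N.
Proof.
move=> Fd; apply/leq_sizeP => k dk; rewrite /line_poly coef_sum big1 // => S _.
rewrite coefZ coefXn; have [kS|] := eqVneq k #|S|; last by rewrite mulr0.
have [->|/Fd] := eqVneq (F S) 0; first by rewrite !mul0r.
by rewrite -kS leqNgt dk.
Qed.

Lemma exists_large_on_line F b d tau : (0 < d)%N -> deg_le F d -> 0 < tau ->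
  \sum_i F [set i] * b i = 1 ->
  exists s, `|s| <= 5 * d%:R * tau /\ tau <= `|mleval F (fun i => s * b i)|.
Proof.
move=> d0 Fd tau0 Fb.
have r1 : (line_poly F b)`_1 = 1 by rewrite coef1_line_poly.
have lt45 : 4 * d%:R * tau < 5 * d%:R * tau.
  by rewrite ltr_pM2r // ltr_pM2r ?ltr0n // ltr_nat.
have [s [s_le large]] := exists_large_value d0 (size_line_poly b Fd) tau0 r1 lt45.
by exists s; rewrite -horner_line_poly.
Qed.

Lemma exists_dual_direction (a : 'I_n -> R) (T : {set 'I_n}) :
  1 <= \sum_(i in T) a i ^+ 2 ->
  exists b : 'I_n -> R, [/\ \sum_i a i * b i = 1, \sum_i b i ^+ 2 <= 1 &
    forall i, `|b i| <= if i \in T then `|a i| else 0].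
Proof.
set eta := \sum_(i in T) _ => eta1; have eta0 : 0 < eta by lra.
exists (fun i => if i \in T then a i / eta else 0); split.
- rewrite (eq_bigr (fun i => if i \in T then a i ^+ 2 / eta else 0)); last first.
    by move=> i _; case: ifP; rewrite ?mulr0 // mulrA -expr2.
  by rewrite -big_mkcond /= -mulr_suml divff // gt_eqF.
- rewrite (eq_bigr (fun i => if i \in T then a i ^+ 2 / eta ^+ 2 else 0)); last first.
    by move=> i _; case: ifP; rewrite ?expr0n // expr_div_n.
  rewrite -big_mkcond /= -mulr_suml -/eta expr2 invfM mulrA divff ?gt_eqF //.
  by rewrite mul1r invf_le1.
- move=> i; case: ifP; rewrite ?normr0 // => _.
  by rewrite normrM normfV (gtr0_norm eta0) ler_pdivrMr // ler_peMr.
Qed.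

Lemma exists_tilt_point F (T : {set 'I_n}) d (tau eps : R) :
  (0 < d)%N -> deg_le F d -> 0 < tau -> 0 <= eps ->
  1 <= \sum_(i in T) F [set i] ^+ 2 -> (forall i, i \in T -> `|F [set i]| <= eps) ->
  exists th : 'I_n -> R, [/\ forall i, `|th i| <= 5 * d%:R * tau * eps,
    \sum_i th i ^+ 2 <= (5 * d%:R * tau) ^+ 2 & tau <= `|mleval F th|].
Proof.
move=> d0 Fd tau0 eps0 mass small.
have [b [Fb b_norm b_le]] := exists_dual_direction mass.
have [s [s_le large]] := exists_large_on_line d0 Fd tau0 Fb.
exists (fun i => s * b i); split => // [i|].
  rewrite normrM; apply: ler_pM; rewrite ?normr_ge0 //.
  by have := b_le i; case: ifP => [/small Fi|_] hb; apply: le_trans hb _.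
under eq_bigr do rewrite exprMn; rewrite -mulr_sumr.
apply: le_trans (ler_wpM2l (sqr_ge0 s) b_norm) _.
by rewrite mulr1 -(real_normK (num_real s)) ler_pXn2r ?nnegrE // (le_trans _ s_le).
Qed.

End Restriction.

Lemma normr_le_1Dsum (R : realType) (I : finType) (f : I -> R) i :
  `|f i| <= 1 + \sum_j `|f j|.
Proof. by rewrite (bigD1 i) //= addrCA lerDl addr_ge0 ?sumr_ge0. Qed.

Lemma exprn_le_expR (R : realType) (x : R) k : 0 <= x -> x ^+ k <= expR (k%:R * x).
Proof.
move=> x0; rewrite expRM_natl lerXn2r ?nnegrE ?expR_ge0 //.
by apply: le_trans (expR_ge1Dx x); rewrite lerDr.
Qed.

Lemma prod_1Dsqr_le_expR (R : realType) n (b : R) (th : 'I_n -> R) : 0 <= b ->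
  \prod_j (1 + b * th j ^+ 2) <= expR (b * \sum_j th j ^+ 2).
Proof.
move=> b0; rewrite mulr_sumr expR_sum; apply: ler_prod => j _.
apply/andP; split; last exact: expR_ge1Dx.
by rewrite addr_ge0 // mulr_ge0 // sqr_ge0.
Qed.

Lemma expRN_le_of_sqr (R : realType) (x P : R) : 0 <= P ->
  1 <= expR (2 * x) * P ^+ 2 -> expR (- x) <= P.
Proof.
move=> P0; rewrite expRM_natl -exprMn -{1}(expr1n R 2).
rewrite ler_pXn2r ?nnegrE ?mulr_ge0 ?expR_ge0 // => h.
by rewrite expRN -div1r ler_pdivrMr ?expR_gt0 // mulrC.
Qed.

Lemma anticoncentration_factor_le (R : realType) n (c b K t : R) d (th : 'I_n -> R) :
  1 <= c -> 0 <= b -> 50 * (c + b) <= K -> 1 <= t -> (0 < d)%N ->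
  \sum_j th j ^+ 2 <= (10 * t * d%:R) ^+ 2 ->
  16 * (c ^+ (2 * d)) ^+ 2 * \prod_j (1 + b * th j ^+ 2) <=
    expR (2 * (K * t ^+ 2 * d%:R ^+ 2)).
Proof.
move=> c1 b0 cbK t1 d0 th_le.
have d1 : 1 <= d%:R :> R by rewrite ler1n.
rewrite (_ : K * t ^+ 2 * d%:R ^+ 2 = K * (t ^+ 2 * d%:R ^+ 2)); last by ring.
set Q := t ^+ 2 * d%:R ^+ 2.
have d_le : d%:R <= Q.
  apply: le_trans (_ : d%:R <= d%:R ^+ 2) _; first by rewrite expr2 ler_peMr ?ler0n.
  by rewrite /Q ler_peMl ?exprn_ege1 ?sqr_ge0.
have Q0 : 0 <= Q by apply: le_trans d_le; rewrite ler0n.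
have e15 : 16 <= expR (15 : R) by apply: le_trans (expR_ge1Dx 15); lra.
have c_pow : (c ^+ (2 * d)) ^+ 2 <= expR ((4 * d)%:R * c).
  rewrite -exprM (_ : (2 * d * 2 = 4 * d)%N); last by lia.
  exact/exprn_le_expR/(le_trans ler01 c1).
have Phi_le : \prod_j (1 + b * th j ^+ 2) <= expR (100 * b * Q).
  apply: (le_trans (prod_1Dsqr_le_expR th b0)); rewrite ler_expR.
  rewrite (_ : 100 * b * Q = b * (10 * t * d%:R) ^+ 2); last by rewrite /Q; ring.
  exact: ler_wpM2l.
have Phi0 : 0 <= \prod_j (1 + b * th j ^+ 2).
  by apply: prodr_ge0 => j _; rewrite addr_ge0 // mulr_ge0 // sqr_ge0.
apply: le_trans (_ : expR 15 * expR ((4 * d)%:R * c) * expR (100 * b * Q) <= _).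
  apply: ler_pM => //; first by rewrite mulr_ge0 ?sqr_ge0 //; lra.
  by apply: ler_pM => //; rewrite ?sqr_ge0 //; lra.
rewrite -!expRD ler_expR natrM.
have : d%:R * c <= c * Q by rewrite mulrC ler_wpM2l // (le_trans ler01 c1).
have : 1 <= c * Q by rewrite mulr_ege1 // (le_trans d1).
have : 0 <= b * Q by rewrite mulr_ge0.
have : 50 * (c * Q) + 50 * (b * Q) <= K * Q.
  by rewrite -mulrDr -mulrDl mulrA ler_wpM2r.
lra.
Qed.

Lemma prod_probE (R : realType) (I : finType) (p v : I -> R) n (P : ('I_n -> R) -> bool) :
  prod_prob p v P = Eprob p (fun w : {ffun 'I_n -> I} => P (fun j => v (w j))).
Proof.
by rewrite /prod_prob big_mkcond; apply: eq_bigr => w _; case: ifP; rewrite ?mulr1 ?mulr0.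
Qed.

Theorem lemma4p11 (R : realType) (I : finType) (p v : I -> R)
  (hp : is_fin_distr p)
  (hmean : fexpect p v = 0)
  (hvar : fexpect p (fun i => v i ^+ 2) = 1) :
  exists K' : R, 0 < K' /\
    forall (n d : nat) (fhat : {set 'I_n} -> R) (T : {set 'I_n}) (t : R),
      deg_le fhat d -> 1 <= t ->
      1 <= \sum_(i in T) fhat [set i] ^+ 2 ->
      (forall i, i \in T -> `|fhat [set i]| <= (K' * t * d%:R)^-1) ->
      expR (- (K' * t ^+ 2 * (d%:R) ^+ 2)) <=
        prod_prob p v (fun x => t <= `|mleval fhat x|).
Proof.
case: hp => p_ge0 p_sum1.
set M := 1 + \sum_i `|v i|; set c := bonami_const p v; set b := tilt_const p v.
have M1 : 1 <= M by rewrite lerDl sumr_ge0.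
have c1 : 1 <= c := bonami_const_ge1 v p_ge0.
have b0 : 0 <= b := tilt_const_ge0 v p_ge0.
exists (50 * (M + c + b)); split => [|n d fhat T t hdeg t1 hsum hsmall]; first lra.
set K := 50 * _ in hsmall *; have K0 : 0 < K by rewrite /K; lra.
have d_gt0 : (0 < d)%N := deg_le_gt0 hdeg (lt_le_trans ltr01 hsum).
have t0 : 0 < t by lra.
have t2 : 0 < 2 * t by lra.
have eps0 : 0 <= (K * t * d%:R)^-1.
  by rewrite invr_ge0 ltW // mulr_gt0 ?ltr0n // mulr_gt0.
have [th [th_le th_sum large]] := exists_tilt_point d_gt0 hdeg t2 eps0 hsum hsmall.
have {}th_le i : `|th i| <= 10 / K.
  rewrite (_ : 10 / K = 5 * d%:R * (2 * t) * (K * t * d%:R)^-1) //.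
  by field; rewrite !gt_eqF ?ltr0n.
have th1 j : `|th j| <= 1 by rewrite (le_trans (th_le j)) // ler_pdivrMr // /K; lra.
have thv j i : `|th j * v i| <= 1.
  rewrite normrM (le_trans (ler_pM _ _ (th_le j) (normr_le_1Dsum v i))) //.
  by rewrite mulrAC ler_pdivrMr // -/M /K; lra.
have := anticoncentration p_ge0 p_sum1 hmean hvar t0 thv th1 hdeg large.
rewrite prod_probE => A; apply: expRN_le_of_sqr; first by apply: Eprod_ge0 => // w; case: ifP.
apply: le_trans A _; rewrite ler_wpM2r ?sqr_ge0 //.
apply: anticoncentration_factor_le => //; first by rewrite -/c -/b /K; lra.
by rewrite (_ : 10 * t * d%:R = 5 * d%:R * (2 * t)) //; ring.
Qed.
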